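(* Let $n\ge k\ge1$ and let $Y\in\mathbb{F}_2^{N_k}$ be fixed with $Y_\emptyset=1$. Let $\ell=(\ell_1,\dots,\ell_k)$ be a uniformly random $k$-tuple of linearly independent linear forms on $\mathbb{F}_2^n$ and, independently, $\varepsilon\in\mathbb{F}_2^k$ uniformly random; set $\alpha_i=1-\varepsilon_i$. Then $$\mathbf{P}\big(\mathcal{L}_{\ell,\alpha}(Y)=0\big)\le 1-2^{-k}.$$
   Context: Let $N_k=\sum_{i=0}^k\binom{n}{i}$ and index the coordinates of $\mathbb{F}_2^{N_k}$ by subsets $S\subseteq[n]$ with $|S|\le k$. For linear forms $\ell_1,\dots,\ell_k$ on $\mathbb{F}_2^n$ (with $\ell_i(x)=\sum_s a_{i,s}x_s$) and $\alpha\in\mathbb{F}_2^k$, expand the polynomial $P_{\ell,\alpha}(x)=\prod_{i=1}^k(\ell_i(x)+\alpha_i)$ in $\mathbb{F}_2[x_1,\dots,x_n]$ and reduce using $x_s^2=x_s$, obtaining the multilinear polynomial $\sum_{S\subseteq[n],|S|\le k}c_S(\ell,\alpha)\prod_{s\in S}x_s$ (the coefficients $c_S(\ell,\alpha)\in\mathbb{F}_2$ are thereby defined; $c_\emptyset$ is the constant term). Define the linear form $\mathcal{L}_{\ell,\alpha}(Y)=\sum_{|S|\le k}c_S(\ell,\alpha)Y_S$ on $\mathbb{F}_2^{N_k}$. *)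

From HB Require Import structures.
From mathcomp Require Import all_boot all_order all_algebra.
Set Implicit Arguments. Unset Strict Implicit. Unset Printing Implicit Defensive.
Import GRing.Theory Num.Theory.
Local Open Scope ring_scope.

(* A k-tuple of linear forms l_1..l_k on F_2^n is a matrix A : 'M['F_2]_(k,n)
   with l_i(x) = \sum_s A i s * x_s.  Linear independence = row_free A. *)

(* Coefficient c_S(l, alpha) of the multilinear reduction of
   P(x) = \prod_i (\sum_s A i s x_s + alpha_i).  Expanding the product, each
   factor i contributes either alpha_i (f i = None) or A i s * x_s (f i = Some s);
   after x_s^2 = x_s the monomial is \prod_{s in S} x_s with S the set of chosen s. *)
Definition coefS (n k : nat) (A : 'M['F_2]_(k, n)) (alpha : 'I_k -> 'F_2)
    (S : {set 'I_n}) : 'F_2 :=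
  \sum_(f : {ffun 'I_k -> option 'I_n} | [set s | Some s \in codom f] == S)
    \prod_(i < k) (match f i with Some s => A i s | None => alpha i end).

Definition Lform (n k : nat) (A : 'M['F_2]_(k, n)) (alpha : 'I_k -> 'F_2)
    (Y : {set 'I_n} -> 'F_2) : 'F_2 :=
  \sum_(S : {set 'I_n} | (#|S| <= k)%N) coefS A alpha S * Y S.

From HB Require Import structures.
From mathcomp Require Import all_boot all_order all_algebra.
From mathcomp Require Import ring.
Import Order.TTheory GRing.Theory Num.Theory.
Set Implicit Arguments.
Unset Strict Implicit.
Unset Printing Implicit Defensive.

Local Open Scope ring_scope.

(* Summing the factor (l_i(x) + 1 - eps_i) over
   eps_i in F_2 gives 1, while a factor contributing a monomial A i s * x_s is
   counted twice and vanishes; so the sum over all eps of the coefficient c_S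
   is [S == set0], and the sum over all eps of L_{l,alpha}(Y) is Y set0 = 1.
   Hence, whatever the forms l, some eps gives a nonzero value: at most
   2^k - 1 of the 2^k shifts are zeros, uniformly in l. *)

Lemma sum_F2 (F : 'F_2 -> 'F_2) : \sum_a F a = F 0 + F 1.
Proof.
change (\sum_(a < 2) F a = F 0 + F 1).
by rewrite big_ord_recl big_ord1; congr (F _ + F _); apply: val_inj.
Qed.

Lemma addrr_F2 (x : 'F_2) : x + x = 0.
Proof. by apply: addrr_pchar2; apply: pchar_Fp. Qed.

Section ShiftAverage.

Variables (n k : nat) (A : 'M['F_2]_(k, n)).

Definition coef_term (alpha : 'I_k -> 'F_2) (f : {ffun 'I_k -> option 'I_n}) :=
  \prod_(i < k) (match f i with Some s => A i s | None => alpha i end).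

Lemma sum_coef_term_shift (f : {ffun 'I_k -> option 'I_n}) :
  \sum_(e : {ffun 'I_k -> 'F_2}) coef_term (fun i => 1 - e i) f
    = (f == [ffun => None])%:R.
Proof.
rewrite /coef_term -(bigA_distr_bigA
  (fun i a => match f i with Some s => A i s | None => 1 - a end)) /=.
under eq_bigr => i _ do rewrite sum_F2.
have [->|f_neq0] := eqVneq f [ffun => None].
  by apply: big1 => i _; rewrite ffunE subr0 subrr addr0.
have [i] : exists i, f i != None.
  apply/existsP; apply: contraNT f_neq0 => /existsPn f_None.
  by apply/eqP/ffunP => i; rewrite ffunE; apply/eqP/negPn/f_None.
by rewrite (bigD1 i) //=; case: (f i) => // s _; rewrite addrr_F2 mul0r.
Qed.

Lemma codom_None_set0 :
  [set s | Some s \in codom ([ffun => None] : {ffun 'I_k -> option 'I_n})] = set0.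
Proof.
by apply/setP => s; rewrite !inE; apply/negbTE/codomP => -[i]; rewrite ffunE.
Qed.

Lemma sum_coefS_shift (S : {set 'I_n}) :
  \sum_(e : {ffun 'I_k -> 'F_2}) coefS A (fun i => 1 - e i) S = (S == set0)%:R.
Proof.
rewrite /coefS exchange_big /=.
under eq_bigr => f _ do rewrite -/(coef_term _ f) sum_coef_term_shift.
have [->|S_neq0] := eqVneq S set0.
  rewrite (bigD1 [ffun => None]) ?codom_None_set0 //= eqxx big1 ?addr0 //.
  by move=> f /andP[_ /negbTE ->].
apply: big1 => f /eqP f_S; case: eqP => // f_None.
by move: S_neq0; rewrite -f_S f_None codom_None_set0 eqxx.
Qed.

Lemma sum_Lform_shift (Y : {set 'I_n} -> 'F_2) :
  \sum_(e : {ffun 'I_k -> 'F_2}) Lform A (fun i => 1 - e i) Y = Y set0.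
Proof.
rewrite /Lform exchange_big /=.
under eq_bigr => S _ do rewrite -big_distrl /= sum_coefS_shift.
rewrite (bigD1 set0) ?cards0 //= eqxx mul1r big1 ?addr0 //.
by move=> S /andP[_ /negbTE ->]; rewrite mul0r.
Qed.

Lemma card_Lform_eq0_lt (Y : {set 'I_n} -> 'F_2) : Y set0 = 1 ->
  (#|[set e : {ffun 'I_k -> 'F_2} | Lform A (fun i => (1 - e i)%R) Y == 0%R]|
     < 2 ^ k)%N.
Proof.
move=> Y0.
have [e Le_neq0] : exists e : {ffun 'I_k -> 'F_2}, Lform A (fun i => 1 - e i) Y != 0.
  apply/existsP; apply: contraPT (sum_Lform_shift Y) => /existsPn L_eq0.
  rewrite Y0 big1 => [|e _]; last exact/eqP/negPn/L_eq0.
  by apply/eqP; rewrite eq_sym oner_eq0.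
have -> : (2 ^ k)%N = #|[set: {ffun 'I_k -> 'F_2}]|.
  by rewrite cardsT card_ffun card_Fp // card_ord.
by apply: proper_card; apply/properP; split=> //; exists e; rewrite ?inE.
Qed.

End ShiftAverage.

Lemma card_pairs_le (T E : finType) (P : pred T) (Q : T -> pred E) (m : nat) :
    (forall t, P t -> #|[set e | Q t e]| <= m)%N ->
  (#|[set p : T * E | P p.1 && Q p.1 p.2]| <= #|[set t | P t]| * m)%N.
Proof.
move=> Q_le; rewrite -sum_nat_cond_const -sum1dep_card.
rewrite -(pair_big_dep P Q (fun _ _ => 1%N)) /=.
by apply: leq_sum => t Pt; rewrite sum1dep_card Q_le.
Qed.

Lemma ler_ratio_subV (F : numFieldType) (N R M : nat) :
  (0 < M)%N -> (N <= R * M.-1)%N -> N%:R / (R * M)%:R <= 1 - M%:R^-1 :> F.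
Proof.
move=> M_gt0 N_le; have M_neq0 : M%:R != 0 :> F by rewrite pnatr_eq0 -lt0n.
have [->|R_gt0] := posnP R.
  by rewrite mul0n invr0 mulr0 subr_ge0 invf_le1 ?ltr0n // ler1n.
rewrite ler_pdivrMr ?ltr0n ?muln_gt0 ?R_gt0 //.
apply: le_trans (_ : (R * M.-1)%:R <= _); first by rewrite ler_nat.
suff -> : (1 - M%:R^-1) * (R * M)%:R = (R * M.-1)%:R :> F by [].
by rewrite -subn1 !natrM natrB //; field.
Qed.

Theorem mainTheorem6 (n k : nat) (hk1 : (1 <= k)%N) (hkn : (k <= n)%N)
    (Y : {set 'I_n} -> 'F_2) (hY : Y set0 = 1) :
  (#|[set p : 'M['F_2]_(k, n) * {ffun 'I_k -> 'F_2} |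
        row_free p.1 && (Lform p.1 (fun i => 1 - p.2 i) Y == 0)]|%:R
   / #|[set p : 'M['F_2]_(k, n) * {ffun 'I_k -> 'F_2} | row_free p.1]|%:R
   : rat) <= 1 - 2%:R ^- k.
Proof.
have card_shifts : #|{ffun 'I_k -> 'F_2}| = (2 ^ k)%N.
  by rewrite card_ffun card_Fp // card_ord.
have -> : [set p : 'M['F_2]_(k, n) * {ffun 'I_k -> 'F_2} | row_free p.1]
    = setX [set A | row_free A] setT.
  by apply/setP => -[A e]; rewrite !inE andbT.
rewrite cardsX cardsT card_shifts -natrX.
apply: ler_ratio_subV; first by rewrite expn_gt0.
apply: (@card_pairs_le 'M['F_2]_(k, n) {ffun 'I_k -> 'F_2} (fun A => row_free A)
         (fun A e => Lform A (fun i => 1 - e i) Y == 0)) => A _.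
by rewrite -ltnS prednK ?expn_gt0 // card_Lform_eq0_lt.
Qed.
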